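(* Let $N\ge1$. The maps $T_\Lambda$, $R_\sigma$, $M_\alpha$ ($\Lambda\subseteq P_N$, $\sigma\in S_N$, $\alpha\in\mathbb{C}^*$) all lie in $\mathfrak{G}_N:=\big[\mathrm{Aut}(\mathbb{D}_N)_\pi\cap\mathrm{N}(\mathfrak{M}_N)\big]\mathfrak{M}_N$. Furthermore, the set $G_N:=\mathfrak{T}_N\mathfrak{R}_N\mathfrak{M}_N$ equipped with the operation $$T_{\Lambda_1}R_{\sigma_1}M_{\alpha_1}\cdot T_{\Lambda_2}R_{\sigma_2}M_{\alpha_2}=T_{\Lambda_1\oplus\sigma_1(\Lambda_2)}R_{\sigma_1\sigma_2}M_{\alpha_1\alpha_2}$$ is a subgroup of $\mathfrak{G}_N$ isomorphic to $\big(\{\pm1\}^N\rtimes_\varphi S_N\big)\times\mathbb{C}^*$, where $\varphi_\sigma(\varepsilon_1,\dots,\varepsilon_N)=(\varepsilon_{\sigma^{-1}(1)},\dots,\varepsilon_{\sigma^{-1}(N)})$.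
   Context: $P_N=\{1,\dots,N\}$; vectors are functions on $P_N$, $v^{-1}[S]=\{\ell:v_\ell\in S\}$; $\mathrm{Tr}(v,\Lambda):=\sum_{\ell\in\Lambda}v_\ell$; $\oplus$ is symmetric difference. $\mathcal{C}:=\{z:\mathrm{Re}(z)>0\text{ or }z\in i\mathbb{R}_{>0}\}$. $\mathbb{D}_N:=\{(w,a,\theta)\in\mathbb{C}\times\mathbb{C}^N\times\mathbb{R}^N: a^{-1}[0]\subseteq\theta^{-1}[\mathbb{R}\smallsetminus\mathbb{Z}]\}$; $\pi(w,a,\theta):=w-\mathrm{Tr}(a,a^{-1}[-\mathcal{C}])$. $\mathrm{Aut}(\mathbb{D}_N)$ is the group of homeomorphisms of $\mathbb{D}_N$; $\mathrm{Aut}(\mathbb{D}_N)_\pi:=\{g:\pi\circ g=\pi\}$. $T_\Lambda(w,a,\theta):=(w-\mathrm{Tr}(a,\Lambda),a\,d(\Lambda),\theta\,d(\Lambda))$ with $d(\Lambda)$ diagonal with entry $-1$ at $\ell\in\Lambda$ and $1$ otherwise; $R_\sigma(w,a,\theta):=(w,a\,r(\sigma),\theta\,r(\sigma))$ with $r(\sigma)$ the matrix whose $\ell$-th column is the $\sigma^{-1}(\ell)$-th column of the identity; $M_\alpha(w,a,\theta):=(\alpha w,\alpha a,\theta)$. $\mathfrak{T}_N,\mathfrak{R}_N,\mathfrak{M}_N$ are the groups generated by the $T_\Lambda$, the $R_\sigma$, the $M_\alpha$ respectively; $\mathrm{N}(\mathfrak{M}_N)$ is the normalizer of $\mathfrak{M}_N$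 in $\mathrm{Aut}(\mathbb{D}_N)$. *)

From HB Require Import structures.
From mathcomp Require Import all_boot all_order all_algebra fingroup perm.
From mathcomp Require Import all_classical all_reals all_analysis.
From mathcomp Require Import complex.
Import Order.TTheory GRing.Theory Num.Theory.
Import numFieldTopology.Exports.

Set Implicit Arguments.
Unset Strict Implicit.
Unset Printing Implicit Defensive.

Local Open Scope ring_scope.
Local Open Scope complex_scope.
Local Open Scope classical_set_scope.

Definition Cx (R : realType) := R[i].
HB.instance Definition _ (R : realType) :=
  PseudoPointedMetric.copy (Cx R) ((R[i])^o).
HB.instance Definition _ (R : realType) :=
  GRing.ClosedField.copy (Cx R) (R[i]).
HB.instance Definition _ (R : realType) :=
  Num.ClosedField.copy (Cx R) (R[i]).

Section Defs.
Variables (R : realType) (N : nat).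
Local Notation C := (Cx R).

(* ambient space C x C^N x R^N (vectors are row vectors indexed by 'I_N,
   i.e. P_N = {0,...,N-1}) *)
Definition Amb := (C * 'rV[C]_N * 'rV[R]_N)%type.

Definition Tr (K : nmodType) (v : 'rV[K]_N) (L : {set 'I_N}) : K :=
  \sum_(l in L) v 0 l.

Definition inCC (z : C) : bool :=
  (0 < complex.Re z) || ((complex.Re z == 0) && (0 < complex.Im z)).

Definition inD (x : Amb) : bool :=
  [forall l, (x.1.2 0 l == 0) ==> (x.2 0 l \isn't a Num.int)].
Definition Dset : set Amb := [set x | inD x].

Definition piA (x : Amb) : C :=
  x.1.1 - Tr x.1.2 [set l | inCC (- x.1.2 0 l)].

Definition dmx (K : pzRingType) (L : {set 'I_N}) : 'M[K]_N :=
  \matrix_(i, j) (if i == j then (if i \in L then -1 else 1) else 0).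
Definition rmx (K : pzRingType) (s : 'S_N) : 'M[K]_N :=
  \matrix_(k, l) ((k == (s^-1)%g l)%:R).

Definition TA (L : {set 'I_N}) (x : Amb) : Amb :=
  (x.1.1 - Tr x.1.2 L, x.1.2 *m dmx C L, x.2 *m dmx R L).
Definition RA (s : 'S_N) (x : Amb) : Amb :=
  (x.1.1, x.1.2 *m rmx C s, x.2 *m rmx R s).
Definition MA (al : C) (x : Amb) : Amb :=
  (al * x.1.1, al *: x.1.2, x.2).

Local Notation Dty := (set_type Dset).

(* restriction of a map of the ambient space to D_N; the fallback branch is
   never used for the maps below when they preserve D_N (always for T, R,
   and for M_alpha with alpha <> 0). *)
Definition liftD (f : Amb -> Amb) (x : Dty) : Dty :=
  match pselect (f (sval x) \in Dset) with
  | left h => exist _ (f (sval x)) h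
  | right _ => x
  end.

Definition T_ (L : {set 'I_N}) : Dty -> Dty := liftD (TA L).
Definition R_ (s : 'S_N) : Dty -> Dty := liftD (RA s).
Definition M_ (al : C) : Dty -> Dty := liftD (MA al).

Definition Aut : set (Dty -> Dty) :=
  [set f : Dty -> Dty | exists g : Dty -> Dty,
     [/\ cancel f g, cancel g f, continuous f & continuous g]].

Definition Aut_pi : set (Dty -> Dty) :=
  [set f : Dty -> Dty | Aut f /\ forall x, piA (sval (f x)) = piA (sval x)].

Definition subgroup (H : set (Dty -> Dty)) : Prop :=
  [/\ H `<=` Aut, H id,
      (forall f g, H f -> H g -> H (f \o g))
    & (forall f, H f -> exists2 g, H g & (f \o g = id /\ g \o f = id))].

Definition gen (S : set (Dty -> Dty)) : set (Dty -> Dty) :=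
  [set f : Dty -> Dty | forall H, subgroup H -> S `<=` H -> H f].

Definition setmul (A B : set (Dty -> Dty)) : set (Dty -> Dty) :=
  [set h : Dty -> Dty | exists f g, [/\ A f, B g & h = f \o g]].

Definition normalizer (H : set (Dty -> Dty)) : set (Dty -> Dty) :=
  [set g : Dty -> Dty | Aut g /\ exists h : Dty -> Dty,
     [/\ cancel g h, cancel h g & [set g \o m \o h | m in H] = H]].

Definition frakT := gen [set T_ L | L in [set: {set 'I_N}]].
Definition frakR := gen [set R_ s | s in [set: 'S_N]].
Definition frakM := gen [set M_ al | al in [set al : C | al != 0]].

Definition frakG := setmul (Aut_pi `&` normalizer frakM) frakM.
Definition GN := setmul (setmul frakT frakR) frakM.

Definition symdiff (A B : {set 'I_N}) : {set 'I_N} := (A :\: B) :|: (B :\: A).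

(* composition of permutations: (permcomp s t) l = s (t l)  (mathcomp's
   (t * s)%g, since mathcomp multiplies permutations left-to-right) *)
Definition permcomp (s t : 'S_N) : 'S_N := (t * s)%g.

Definition SP := ({ffun 'I_N -> int} * 'S_N * C)%type.
Definition SPcarrier : set SP :=
  [set x : SP | [forall l, (x.1.1 l == 1%:Z) || (x.1.1 l == - 1%:Z)] && (x.2 != 0)].
Definition phi (s : 'S_N) (e : {ffun 'I_N -> int}) : {ffun 'I_N -> int} :=
  [ffun l => e ((s^-1)%g l)].
Definition SPmul (x y : SP) : SP :=
  ([ffun l => x.1.1 l * phi x.1.2 y.1.1 l], permcomp x.1.2 y.1.2, x.2 * y.2).

End Defs.

Arguments Amb : clear implicits.
Arguments inD : clear implicits.
Arguments Dset : clear implicits.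
Arguments piA : clear implicits.
Arguments TA : clear implicits.
Arguments RA : clear implicits.
Arguments MA : clear implicits.
Arguments liftD : clear implicits.
Arguments T_ : clear implicits.
Arguments R_ : clear implicits.
Arguments M_ : clear implicits.
Arguments Aut : clear implicits.
Arguments Aut_pi : clear implicits.
Arguments subgroup : clear implicits.
Arguments gen : clear implicits.
Arguments setmul : clear implicits.
Arguments normalizer : clear implicits.
Arguments frakT : clear implicits.
Arguments frakR : clear implicits.
Arguments frakM : clear implicits.
Arguments frakG : clear implicits.
Arguments GN : clear implicits.
Arguments symdiff : clear implicits.
Arguments permcomp : clear implicits.
Arguments SP : clear implicits.
Arguments SPcarrier : clear implicits.
Arguments phi : clear implicits.
Arguments SPmul : clear implicits.

From HB Require Import structures.
From mathcomp Require Import all_boot all_order all_algebra fingroup perm.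
From mathcomp Require Import all_classical all_reals all_analysis.
From mathcomp Require Import complex.
Import Order.TTheory GRing.Theory Num.Theory.
Import numFieldTopology.Exports.
Local Open Scope ring_scope.
Local Open Scope classical_set_scope.

(* T_L, R_s and M_a are restrictions to D_N of homeomorphisms of the ambient space
   C x C^N x R^N that preserve D_N.  They satisfy M_a T_L = T_L M_a, M_a R_s = R_s M_a,
   R_s T_L = T_(s L) R_s and T_L T_L' = T_(L (+) L'), so {T_L}, {R_s} and {M_a} are already
   groups, and products T R M compose by the stated rule.  T_L and R_s preserve pi, and
   T_L R_s commutes with every M_a, hence normalizes the group of the M_a.  Finally
   (e, s, a) |-> T_(e^-1[-1]) R_s M_a is a homomorphism, injective because its value at a
   single well-chosen point of D_N already determines e, s and a. *)

Lemma continuous_mx (X T : topologicalType) (m n : nat) (f : X -> 'M[T]_(m, n)) :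
  (forall i j, continuous (fun x => f x i j)) -> continuous f.
Proof.
move=> cf x A [P HP sPA].
have : \forall y \near x, forall i j, P i j (f y i j).
  by do 2![apply: filter_forall => ?]; exact: cf.
by apply: filterS => y Py; exact: sPA.
Qed.

Lemma mxE_continuous (T : topologicalType) (m n : nat) (i : 'I_m) (j : 'I_n) :
  continuous (fun M : 'M[T]_(m, n) => M i j).
Proof.
move=> M U MU; exists (fun i' j' => if (i' == i) && (j' == j) then U else setT).
  by move=> i' j'; case: ifP => [/andP[/eqP -> /eqP ->]//|_]; exact: filterT.
by move=> M' /(_ i j); rewrite !eqxx.
Qed.

Lemma comp_continuous (X Y Z : topologicalType) (f : X -> Y) (g : Y -> Z) :
  continuous f -> continuous g -> continuous (g \o f).
Proof. by move=> cf cg x; exact: continuous_comp (cf x) (cg (f x)). Qed.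

Lemma pair_continuous (X Y Z : topologicalType) (f : X -> Y) (g : X -> Z) :
  continuous f -> continuous g -> continuous (fun x => (f x, g x)).
Proof. by move=> cf cg x; apply: cvg_pair; [exact: cf | exact: cg]. Qed.

Lemma fst_continuous (X Y : topologicalType) : continuous (@fst X Y).
Proof. by move=> ?; exact: cvg_fst. Qed.

Lemma snd_continuous (X Y : topologicalType) : continuous (@snd X Y).
Proof. by move=> ?; exact: cvg_snd. Qed.

Section NumFieldContinuity.
Variable K : numFieldType.

Lemma sum_continuous (X : topologicalType) (I : Type) (r : seq I) (P : pred I)
    (F : I -> X -> K) :
  (forall i, P i -> continuous (F i)) ->
  continuous (fun x => \sum_(i <- r | P i) F i x).
Proof. by apply: continuous_big; exact: (@add_continuous K^o). Qed.

Lemma mulmx_continuous (m n p : nat) (A : 'M[K]_(n, p)) :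
  continuous (fun M : 'M[K]_(m, n) => M *m A).
Proof.
apply: continuous_mx => i j; under eq_fun do rewrite mxE.
apply: sum_continuous => k _ M.
by apply: continuousM; [exact: mxE_continuous | exact: cst_continuous].
Qed.

Lemma scalemx_continuous (m n : nat) (a : K) :
  continuous (fun M : 'M[K]_(m, n) => a *: M).
Proof. by under eq_fun do rewrite -mul_mx_scalar; exact: mulmx_continuous. Qed.

Lemma Tr_continuous (n : nat) (L : {set 'I_n}) :
  continuous (fun v : 'rV[K]_n => Tr v L).
Proof. by apply: sum_continuous => l _; exact: mxE_continuous. Qed.

End NumFieldContinuity.

Lemma mem_imset_perm (T : finType) (s : {perm T}) (A : {set T}) (x : T) :
  (x \in s @: A) = ((s^-1)%g x \in A).
Proof. by rewrite -{1}(permKV s x) mem_imset //; exact: perm_inj. Qed.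

Lemma eq_signed_pos (K : numDomainType) (b1 b2 : bool) (t1 t2 : K) :
  0 < t1 -> 0 < t2 ->
  (if b1 then - t1 else t1) = (if b2 then - t2 else t2) -> b1 = b2 /\ t1 = t2.
Proof.
move=> t1_gt0 t2_gt0; case: b1; case: b2 => E //.
- by split=> //; exact: oppr_inj.
- by move: t2_gt0; rewrite -E oppr_gt0 => /(lt_trans t1_gt0); rewrite ltxx.
- by move: t1_gt0; rewrite E oppr_gt0 => /(lt_trans t2_gt0); rewrite ltxx.
Qed.

Section Ambient.
Variables (R : realType) (N : nat).
Local Notation C := (Cx R).

Lemma row_mul_dmxE (K : pzRingType) (v : 'rV[K]_N) (L : {set 'I_N}) (l : 'I_N) :
  (v *m dmx K L) 0 l = if l \in L then - v 0 l else v 0 l.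
Proof.
rewrite mxE (bigD1 l) //= big1 => [|k /negbTE kl]; last by rewrite mxE kl mulr0.
by rewrite mxE eqxx addr0; case: ifP; rewrite ?mulrN1 ?mulr1.
Qed.

Lemma row_mul_rmxE (K : pzRingType) (v : 'rV[K]_N) (s : 'S_N) (l : 'I_N) :
  (v *m rmx K s) 0 l = v 0 ((s^-1)%g l).
Proof.
rewrite mxE (bigD1 ((s^-1)%g l)) //= big1 => [|k /negbTE kl]; last by rewrite mxE kl mulr0.
by rewrite mxE eqxx addr0 mulr1.
Qed.

Lemma symdiffv (L : {set 'I_N}) : symdiff N L L = finset.set0.
Proof. by rewrite /symdiff finset.setDv finset.setU0. Qed.

Lemma inD_TA L : {homo TA R N L : x / inD R N x}.
Proof.
move=> x /forallP xD; apply/forallP => l; rewrite !row_mul_dmxE.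
by case: (l \in L); rewrite ?oppr_eq0 ?rpredN; exact: xD.
Qed.

Lemma inD_RA s : {homo RA R N s : x / inD R N x}.
Proof. by move=> x /forallP xD; apply/forallP => l; rewrite !row_mul_rmxE. Qed.

Lemma inD_MA (a : C) : a != 0 -> {homo MA R N a : x / inD R N x}.
Proof.
move=> a0 x /forallP xD; apply/forallP => l.
by rewrite /= mxE mulf_eq0 (negbTE a0); exact: xD.
Qed.

Lemma TA_TA L1 L2 x : TA R N L1 (TA R N L2 x) = TA R N (symdiff N L1 L2) x.
Proof.
have sign_symdiff (K : zmodType) (u : K) l : (if l \in L1 then - (if l \in L2 then - u else u)
    else if l \in L2 then - u else u) = if l \in symdiff N L1 L2 then - u else u.
  by rewrite !inE; case: (l \in L1); case: (l \in L2); rewrite ?opprK.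
case: x => [[w a] t]; congr (_, _, _); last 2 first.
- by apply/rowP => l; rewrite !row_mul_dmxE sign_symdiff.
- by apply/rowP => l; rewrite !row_mul_dmxE sign_symdiff.
rewrite /= /Tr -addrA -opprD; congr (_ - _).
rewrite big_mkcond [X in _ + X]big_mkcond [RHS]big_mkcond -big_split.
apply: eq_bigr => l _ /=; rewrite row_mul_dmxE !inE.
by case: (l \in L1); case: (l \in L2); rewrite /= ?addr0 ?add0r ?subrr.
Qed.

Lemma TA0 x : TA R N finset.set0 x = x.
Proof.
case: x => [[w a] t]; congr (_, _, _).
- by rewrite /= /Tr big_set0 subr0.
- by apply/rowP => l; rewrite row_mul_dmxE inE.
- by apply/rowP => l; rewrite row_mul_dmxE inE.
Qed.

Lemma RA_TA s L x : RA R N s (TA R N L x) = TA R N (s @: L) (RA R N s x).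
Proof.
case: x => [[w a] t]; congr (_, _, _).
- congr (_ - _); rewrite /= /Tr big_mkcond [RHS]big_mkcond.
  rewrite [RHS](reindex_inj (@perm_inj _ s)) /=.
  by apply: eq_bigr => l _; rewrite row_mul_rmxE permK mem_imset_perm permK.
- by apply/rowP => l; rewrite /= row_mul_dmxE !row_mul_rmxE row_mul_dmxE mem_imset_perm.
- by apply/rowP => l; rewrite /= row_mul_dmxE !row_mul_rmxE row_mul_dmxE mem_imset_perm.
Qed.

Lemma RA_RA s1 s2 x : RA R N s1 (RA R N s2 x) = RA R N (permcomp N s1 s2) x.
Proof.
by case: x => [[w a] t]; congr (_, _, _); apply/rowP => l;
  rewrite /= !row_mul_rmxE invMg permM.
Qed.

Lemma RA1 x : RA R N 1%g x = x.
Proof.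
by case: x => [[w a] t]; congr (_, _, _); apply/rowP => l;
  rewrite /= row_mul_rmxE invg1 perm1.
Qed.

Lemma MA_TA (al : C) L x : MA R N al (TA R N L x) = TA R N L (MA R N al x).
Proof.
case: x => [[w a] t]; congr (_, _, _).
- by rewrite /= mulrBr /Tr mulr_sumr; congr (_ - _); apply: eq_bigr => l _; rewrite mxE.
- by apply/rowP => l; rewrite /= [LHS]mxE !row_mul_dmxE mxE; case: ifP; rewrite ?mulrN.
Qed.

Lemma MA_RA (al : C) s x : MA R N al (RA R N s x) = RA R N s (MA R N al x).
Proof.
by case: x => [[w a] t]; congr (_, _, _); apply/rowP => l;
  rewrite /= [LHS]mxE !row_mul_rmxE mxE.
Qed.

Lemma MA_MA (a b : C) x : MA R N a (MA R N b x) = MA R N (a * b) x.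
Proof. by case: x => [[w v] t]; rewrite /MA /= mulrA scalerA. Qed.

Lemma MA1 x : MA R N 1 x = x.
Proof. by case: x => [[w a] t]; rewrite /MA /= mul1r scale1r. Qed.

Lemma TA_RA_MA_comp L1 L2 s1 s2 (a1 a2 : C) x :
  TA R N L1 (RA R N s1 (MA R N a1 (TA R N L2 (RA R N s2 (MA R N a2 x))))) =
  TA R N (symdiff N L1 (s1 @: L2)) (RA R N (permcomp N s1 s2) (MA R N (a1 * a2) x)).
Proof. by rewrite MA_TA MA_RA MA_MA RA_TA RA_RA TA_TA. Qed.

Lemma inCCN (z : C) : z != 0 -> inCC (- z) = ~~ inCC z.
Proof.
case: z => x y z0; rewrite /inCC /= oppr_gt0 oppr_eq0 oppr_gt0.
have [x_lt0|x_gt0|x0] := ltgtP x 0 => //=.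
have [y_lt0|y_gt0|y0] := ltgtP y 0 => //.
by move: z0; rewrite x0 y0 eqxx.
Qed.

(* Flipping a nonzero coordinate a_l moves it into or out of -C, which exactly
   compensates its contribution to Tr(a, L). *)
Lemma piA_TA L x : piA R N (TA R N L x) = piA R N x.
Proof.
case: x => [[w a] t]; rewrite /piA /= -addrA -opprD; congr (_ - _).
rewrite /Tr big_mkcond [X in _ + X]big_mkcond [RHS]big_mkcond -big_split.
apply: eq_bigr => l _; rewrite !inE row_mul_dmxE /=.
case: (l \in L) => /=; last by rewrite add0r.
have [->|a0] := eqVneq (a 0 l) 0; first by rewrite oppr0 !if_same addr0.
by rewrite opprK (inCCN _ a0); case: (inCC (a 0 l)); rewrite ?subrr ?addr0.
Qed.

Lemma piA_RA s x : piA R N (RA R N s x) = piA R N x.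
Proof.
case: x => [[w a] t]; rewrite /piA /=; congr (_ - _); rewrite /Tr.
rewrite big_mkcond [RHS]big_mkcond [RHS](reindex_inj (@perm_inj _ (s^-1)%g)) /=.
by apply: eq_bigr => l _; rewrite !inE row_mul_rmxE.
Qed.

Lemma Amb_map_continuous (fw : C * 'rV[C]_N -> C) (fa : 'rV[C]_N -> 'rV[C]_N)
    (ft : 'rV[R]_N -> 'rV[R]_N) :
  continuous fw -> continuous fa -> continuous ft ->
  continuous (fun x : Amb R N => (fw x.1, fa x.1.2, ft x.2)).
Proof.
move=> cw ca ct; apply: pair_continuous; first apply: pair_continuous.
- exact: comp_continuous (@fst_continuous _ _) cw.
- have a_continuous : continuous (fun x : Amb R N => x.1.2).
    exact: comp_continuous (@fst_continuous _ _) (@snd_continuous _ _).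
  exact: comp_continuous a_continuous ca.
- exact: comp_continuous (@snd_continuous _ _) ct.
Qed.

Lemma TA_continuous L : continuous (TA R N L).
Proof.
apply: (@Amb_map_continuous (fun p => p.1 - Tr p.2 L) (mulmx^~ (dmx C L))
  (mulmx^~ (dmx R L))); try exact: mulmx_continuous.
move=> p; apply: (@continuousB _ (R[i])^o _ fst (fun p => Tr p.2 L)).
  exact: fst_continuous.
exact: comp_continuous (@snd_continuous _ _) (@Tr_continuous _ _ L) p.
Qed.

Lemma RA_continuous s : continuous (RA R N s).
Proof.
apply: (@Amb_map_continuous fst (mulmx^~ (rmx C s)) (mulmx^~ (rmx R s)));
  [exact: fst_continuous | exact: mulmx_continuous..].
Qed.

Lemma MA_continuous (a : C) : continuous (MA R N a).
Proof.
apply: (@Amb_map_continuous (fun p => a * p.1) ( *:%R a) id).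
- by move=> p; apply: cvgM; [exact: cvg_cst | exact: cvg_fst].
- exact: scalemx_continuous.
- by move=> ?.
Qed.

(* The theta-coordinates 1, ..., N of the probe are distinct and nonzero, so its image under
   T_L R_s M_c records L and s; its a-coordinates record c. *)
Definition probe : Amb R N := (0, const_mx 1, \row_(l < N) ((l : nat)%:R + 1)).

Lemma inD_probe : inD R N probe.
Proof. by apply/forallP => l; rewrite mxE oner_eq0. Qed.

Lemma TA_RA_MA_probe_inj : (0 < N)%N -> forall L1 L2 s1 s2 (c1 c2 : C),
  TA R N L1 (RA R N s1 (MA R N c1 probe)) = TA R N L2 (RA R N s2 (MA R N c2 probe)) ->
  [/\ L1 = L2, s1 = s2 & c1 = c2].
Proof.
move=> N_gt0 L1 L2 s1 s2 c1 c2 E.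
have theta_l L s c l : (TA R N L (RA R N s (MA R N c probe))).2 0 l =
    if l \in L then - (((s^-1)%g l : nat)%:R + 1) else ((s^-1)%g l : nat)%:R + 1.
  by rewrite /= row_mul_dmxE row_mul_rmxE mxE.
have a_l L s c l : (TA R N L (RA R N s (MA R N c probe))).1.2 0 l = if l \in L then - c else c.
  by rewrite /= row_mul_dmxE row_mul_rmxE !mxE mulr1.
have coord l : (l \in L1) = (l \in L2) /\ (s1^-1)%g l = (s2^-1)%g l.
  move: (congr1 (fun x : Amb R N => x.2 0 l) E); cbv beta; rewrite !theta_l.
  case/eq_signed_pos; rewrite ?natr1 ?ltr0Sn // => -> /eqP.
  by rewrite eqr_nat eqSS => /eqP/ord_inj.
have L12 : L1 = L2 by apply/setP => l; case: (coord l).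
have s12 : s1 = s2 by apply: invg_inj; apply/permP => l; case: (coord l).
split=> //; move: (congr1 (fun x : Amb R N => x.1.2 0 (Ordinal N_gt0)) E); cbv beta.
by rewrite !a_l L12; case: ifP => _ // /oppr_inj.
Qed.

End Ambient.

Section Automorphisms.
Variables (R : realType) (N : nat).
Local Notation C := (Cx R).
Local Notation Dty := (set_type (Dset R N)).
Local Notation inD := (inD R N).
Local Notation liftD := (liftD R N).
Local Notation T_ := (T_ R N).
Local Notation R_ := (R_ R N).
Local Notation M_ := (M_ R N).

Lemma D_funext (f g : Dty -> Dty) : (forall x, sval (f x) = sval (g x)) -> f = g.
Proof. by move=> fg; apply: funext => x; apply: val_inj; exact: fg. Qed.

Lemma liftD_val f : {homo f : x / inD x} -> forall x, sval (liftD f x) = f (sval x).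
Proof.
move=> fD [x xD]; rewrite /liftD /=; case: pselect => //= -[].
by apply/mem_set/fD; exact: set_mem xD.
Qed.

Lemma liftD_continuous f : {homo f : x / inD x} -> continuous f -> continuous (liftD f).
Proof.
move=> fD cf; apply: (@continuous_comp_initial _ _ _ (@set_val _ (Dset R N))).
have -> : set_val \o liftD f = f \o set_val.
  by apply: funext => x; rewrite /= set_valE; exact: liftD_val.
by apply: comp_continuous cf; exact: initial_continuous.
Qed.

Lemma liftD_Aut f g : {homo f : x / inD x} -> {homo g : x / inD x} ->
  continuous f -> continuous g -> cancel f g -> cancel g f -> Aut R N (liftD f).
Proof.
move=> fD gD cf cg fK gK; exists (liftD g); split.
- by move=> x; apply: val_inj; rewrite /= !liftD_val.
- by move=> x; apply: val_inj; rewrite /= !liftD_val.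
- exact: liftD_continuous.
- exact: liftD_continuous.
Qed.

Lemma Aut_comp {f g : Dty -> Dty} : Aut R N f -> Aut R N g -> Aut R N (f \o g).
Proof.
move=> [f' [fK f'K cf cf']] [g' [gK g'K cg cg']]; exists (g' \o f'); split.
- exact: can_comp.
- exact: can_comp.
- exact: comp_continuous.
- exact: comp_continuous.
Qed.

Lemma T_val L x : sval (T_ L x) = TA R N L (sval x).
Proof. exact/liftD_val/inD_TA. Qed.

Lemma R_val s x : sval (R_ s x) = RA R N s (sval x).
Proof. exact/liftD_val/inD_RA. Qed.

Lemma M_val (a : C) x : a != 0 -> sval (M_ a x) = MA R N a (sval x).
Proof. by move=> a0; apply/liftD_val/inD_MA. Qed.

Lemma Aut_T L : Aut R N (T_ L).
Proof.
have TAK : cancel (TA R N L) (TA R N L) by move=> x; rewrite TA_TA symdiffv TA0.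
by apply: (liftD_Aut _ _ _ _ _ _ TAK TAK); first [exact: inD_TA | exact: TA_continuous].
Qed.

Lemma Aut_R s : Aut R N (R_ s).
Proof.
apply: (@liftD_Aut _ (RA R N (s^-1)%g)); try exact: inD_RA; try exact: RA_continuous.
- by move=> x; rewrite RA_RA /permcomp mulgV RA1.
- by move=> x; rewrite RA_RA /permcomp mulVg RA1.
Qed.

Lemma Aut_M (a : C) : a != 0 -> Aut R N (M_ a).
Proof.
move=> a0; have ai0 : a^-1 != 0 by rewrite invr_eq0.
apply: (@liftD_Aut _ (MA R N a^-1)); try exact: inD_MA; try exact: MA_continuous.
- by move=> x; rewrite MA_MA mulVf // MA1.
- by move=> x; rewrite MA_MA divff // MA1.
Qed.

Lemma T_T L1 L2 : T_ L1 \o T_ L2 = T_ (symdiff N L1 L2).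
Proof. by apply: D_funext => x; rewrite /= !T_val TA_TA. Qed.

Lemma R_R s1 s2 : R_ s1 \o R_ s2 = R_ (permcomp N s1 s2).
Proof. by apply: D_funext => x; rewrite /= !R_val RA_RA. Qed.

Lemma M_M (a b : C) : a != 0 -> b != 0 -> M_ a \o M_ b = M_ (a * b).
Proof.
move=> a0 b0; have ab0 : a * b != 0 by rewrite mulf_neq0.
by apply: D_funext => x; rewrite /= !M_val // MA_MA.
Qed.

Lemma T_0 : T_ finset.set0 = id.
Proof. by apply: D_funext => x; rewrite T_val TA0. Qed.

Lemma R_1 : R_ 1%g = id.
Proof. by apply: D_funext => x; rewrite R_val RA1. Qed.

Lemma M_1 : M_ 1 = id.
Proof. by apply: D_funext => x; rewrite M_val ?oner_neq0 // MA1. Qed.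

Lemma TRM_comp L1 L2 s1 s2 (a1 a2 : C) : a1 != 0 -> a2 != 0 ->
  (T_ L1 \o R_ s1 \o M_ a1) \o (T_ L2 \o R_ s2 \o M_ a2)
  = T_ (symdiff N L1 (s1 @: L2)) \o R_ (permcomp N s1 s2) \o M_ (a1 * a2).
Proof.
move=> a1_neq0 a2_neq0; have a12_neq0 : a1 * a2 != 0 by rewrite mulf_neq0.
by apply: D_funext => x; rewrite /= !(T_val, R_val, M_val) // TA_RA_MA_comp.
Qed.

Lemma piA_TR L s x : piA R N (sval ((T_ L \o R_ s) x)) = piA R N (sval x).
Proof. by rewrite /= T_val R_val piA_TA piA_RA. Qed.

Lemma TR_M_commute L s (a : C) : a != 0 -> (T_ L \o R_ s) \o M_ a = M_ a \o (T_ L \o R_ s).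
Proof.
by move=> a0; apply: D_funext => x; rewrite /= !(T_val, R_val, M_val) // MA_TA MA_RA.
Qed.

Lemma gen_subgroup (H : set (Dty -> Dty)) : subgroup R N H -> gen R N H = H.
Proof.
move=> Hsub; apply/seteqP; split=> [f /(_ H Hsub (@subset_refl _ H)) //|f Hf K _ HK].
exact: HK.
Qed.

Lemma image_subgroup (I : Type) (P : set I) (F : I -> Dty -> Dty) (e : I)
    (mul : I -> I -> I) (inv : I -> I) :
  (forall i, P i -> Aut R N (F i)) -> P e -> F e = id ->
  (forall i j, P i -> P j -> P (mul i j) /\ F i \o F j = F (mul i j)) ->
  (forall i, P i -> [/\ P (inv i), mul i (inv i) = e & mul (inv i) i = e]) ->
  subgroup R N (F @` P).
Proof.
move=> FAut Pe Fe Fmul Finv; split.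
- by move=> _ [i Pi <-]; exact: FAut.
- by exists e.
- by move=> _ _ [i Pi <-] [j Pj <-]; have [Pij ->] := Fmul i j Pi Pj; exists (mul i j).
- move=> _ [i Pi <-]; have [Pinv iK Ki] := Finv i Pi.
  exists (F (inv i)); first by exists (inv i).
  by rewrite (Fmul _ _ Pi Pinv).2 (Fmul _ _ Pinv Pi).2 iK Ki Fe.
Qed.

Lemma frakTE : frakT R N = [set T_ L | L in [set: {set 'I_N}]].
Proof.
apply/gen_subgroup/(@image_subgroup _ _ _ finset.set0 (symdiff N) id) => //.
- by move=> L _; exact: Aut_T.
- exact: T_0.
- by move=> L1 L2 _ _; rewrite T_T.
- by move=> L _; rewrite symdiffv.
Qed.

Lemma frakRE : frakR R N = [set R_ s | s in [set: 'S_N]].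
Proof.
apply/gen_subgroup/(@image_subgroup _ _ _ 1%g (permcomp N) (fun s => (s^-1)%g)) => //.
- by move=> s _; exact: Aut_R.
- exact: R_1.
- by move=> s1 s2 _ _; rewrite R_R.
- by move=> s _; rewrite /permcomp mulgV mulVg.
Qed.

Lemma frakME : frakM R N = [set M_ a | a in [set a : C | a != 0]].
Proof.
apply/gen_subgroup/(@image_subgroup _ _ _ 1 *%R (fun a => a^-1)).
- by move=> a; exact: Aut_M.
- exact: oner_neq0.
- exact: M_1.
- by move=> a b a0 b0; rewrite /= M_M ?mulf_neq0.
- by move=> a a0; rewrite /= invr_eq0 mulfV // mulVf.
Qed.

Lemma normalizer_commute (H : set (Dty -> Dty)) (g h : Dty -> Dty) :
  Aut R N g -> cancel g h -> cancel h g -> (forall m, H m -> g \o m = m \o g) ->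
  normalizer R N H g.
Proof.
move=> gAut gK hK gH; split=> //; exists h; split=> //.
have conj_id m : H m -> g \o m \o h = m.
  by move=> Hm; rewrite gH //; apply: funext => x /=; rewrite hK.
by apply/seteqP; split=> [_ [m Hm <-]|m Hm]; [rewrite conj_id | exists m; rewrite ?conj_id].
Qed.

Lemma frakG_TRM L s (a : C) : a != 0 -> frakG R N (T_ L \o R_ s \o M_ a).
Proof.
move=> a0; have TR_Aut := Aut_comp (Aut_T L) (Aut_R s).
exists (T_ L \o R_ s), (M_ a); split; last by [].
- split; first by split=> // x; exact: piA_TR.
  apply: (@normalizer_commute _ _ (R_ (s^-1)%g \o T_ L)) => //.
  + move=> x; apply: val_inj; rewrite /= !(T_val, R_val).
    by rewrite TA_TA symdiffv TA0 RA_RA /permcomp mulgV RA1.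
  + move=> x; apply: val_inj; rewrite /= !(T_val, R_val).
    by rewrite RA_RA /permcomp mulVg RA1 TA_TA symdiffv TA0.
  + by rewrite frakME => _ [b b0 <-]; exact: TR_M_commute.
- by rewrite frakME; exists a.
Qed.

Lemma GNE : GN R N = [set h | exists (L : {set 'I_N}) (s : 'S_N) (a : C),
                          a != 0 /\ h = T_ L \o R_ s \o M_ a].
Proof.
rewrite /GN frakTE frakRE frakME; apply/seteqP; split=> h.
- by case=> _ [_ [[_ [_ [[L _ <-] [s _ <-] ->]]] [a a0 <-] ->]]; exists L, s, a.
- case=> L [s [a [a0 ->]]]; exists (T_ L \o R_ s), (M_ a); split; last by [].
  + by exists (T_ L), (R_ s); split; [exists L | exists s | ].
  + by exists a.
Qed.

Lemma GN_subgroup : subgroup R N (GN R N).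
Proof.
pose P (x : {set 'I_N} * 'S_N * C) := x.2 != 0.
pose F (x : {set 'I_N} * 'S_N * C) := T_ x.1.1 \o R_ x.1.2 \o M_ x.2.
have -> : GN R N = F @` P.
  by rewrite GNE; apply/seteqP; split=> [h [L [s [a [a0 ->]]]]|_ [[[L s] a] a0 <-]];
    [exists (L, s, a) | exists L, s, a].
apply: (@image_subgroup _ P F (finset.set0, 1%g, 1)
  (fun x y => (symdiff N x.1.1 (x.1.2 @: y.1.1), permcomp N x.1.2 y.1.2, x.2 * y.2))
  (fun x => ((x.1.2^-1)%g @: x.1.1, (x.1.2^-1)%g, x.2^-1))).
- by move=> [[L s] a] a0; exact: Aut_comp (Aut_comp (Aut_T _) (Aut_R _)) (Aut_M _ a0).
- exact: oner_neq0.
- by rewrite /F /= T_0 R_1 M_1.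
- by move=> [[L1 s1] a1] [[L2 s2] a2] a10 a20; split; [exact: mulf_neq0 | exact: TRM_comp].
- move=> [[L s] a] a0; rewrite /P /= invr_eq0 divff // mulVf // /permcomp mulgV mulVg.
  have sK : s @: ((s^-1)%g @: L) = L.
    by apply/setP => l; rewrite !mem_imset_perm invgK permKV.
  by rewrite sK !symdiffv.
Qed.

Lemma GN_sub_frakG : GN R N `<=` frakG R N.
Proof. by rewrite GNE => _ [L [s [a [a0 ->]]]]; exact: frakG_TRM. Qed.

Definition neg_support (e : {ffun 'I_N -> int}) : {set 'I_N} := [set l | e l == -1].

Definition sign_vector (e : {ffun 'I_N -> int}) : bool :=
  [forall l, (e l == 1%:Z) || (e l == - 1%:Z)].

Lemma neg_support_mul e1 e2 s : sign_vector e1 -> sign_vector e2 ->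
  neg_support [ffun l => e1 l * phi N s e2 l]
  = symdiff N (neg_support e1) (s @: neg_support e2).
Proof.
move=> /forallP e1S /forallP e2S; apply/setP => l.
rewrite /symdiff !inE mem_imset_perm !inE /phi !ffunE.
by case/orP: (e1S l) => /eqP ->; case/orP: (e2S ((s^-1)%g l)) => /eqP ->.
Qed.

Lemma neg_support_inj e1 e2 : sign_vector e1 -> sign_vector e2 ->
  neg_support e1 = neg_support e2 -> e1 = e2.
Proof.
move=> /forallP e1S /forallP e2S /setP E; apply/ffunP => l; move: (E l); rewrite !inE.
by case/orP: (e1S l) => /eqP ->; case/orP: (e2S l) => /eqP ->.
Qed.

Definition trm_of (x : SP R N) : Dty -> Dty := T_ (neg_support x.1.1) \o R_ x.1.2 \o M_ x.2.

Lemma trm_of_morph x y : SPcarrier R N x -> SPcarrier R N y ->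
  trm_of (SPmul R N x y) = trm_of x \o trm_of y.
Proof.
case: x y => [[e1 s1] c1] [[e2 s2] c2] /andP[e1S c1_neq0] /andP[e2S c2_neq0].
by rewrite /trm_of TRM_comp // -neg_support_mul.
Qed.

Lemma trm_of_inj : (0 < N)%N -> forall x y, SPcarrier R N x -> SPcarrier R N y ->
  trm_of x = trm_of y -> x = y.
Proof.
move=> N_gt0 [[e1 s1] c1] [[e2 s2] c2] /andP[e1S c1_neq0] /andP[e2S c2_neq0].
pose p : Dty := exist _ (probe R N) (@mem_set _ (Dset R N) _ (inD_probe R N)).
move=> /(congr1 (fun f : Dty -> Dty => sval (f p))).
rewrite /= !(T_val, R_val, M_val) // => /(TA_RA_MA_probe_inj _ _ N_gt0)[e12 s12 c12].
by congr (_, _, _); first exact: neg_support_inj e1S e2S e12.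
Qed.

Lemma trm_of_image : trm_of @` SPcarrier R N = GN R N.
Proof.
rewrite GNE; apply/seteqP; split=> [_ [[[e s] c] /andP[_ c0] <-]|_ [L [s [a [a0 ->]]]]].
  by exists (neg_support e), s, c.
pose e : {ffun 'I_N -> int} := [ffun l => if l \in L then -1 else 1].
have eL : neg_support e = L by apply/setP => l; rewrite !inE ffunE; case: (l \in L).
exists (e, s, a); last by rewrite /trm_of eL.
by rewrite /SPcarrier /= a0 andbT; apply/forallP => l; rewrite ffunE; case: (l \in L).
Qed.

End Automorphisms.

Theorem proposition2 (R : realType) (N : nat) (hN : (0 < N)%N) :
  (* T_Lambda, R_sigma, M_alpha (alpha in C^* ) all lie in frak G_N *)
  [/\ (forall L : {set 'I_N}, frakG R N (T_ R N L)),
      (forall s : 'S_N, frakG R N (R_ R N s)),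
      (forall al : Cx R, al != 0 -> frakG R N (M_ R N al)),
  (* G_N is exactly the set of the T_Lambda R_sigma M_alpha, and the product
     (composition) of two of them is given by the stated formula *)
      GN R N = [set h | exists (L : {set 'I_N}) (s : 'S_N) (al : Cx R),
                          al != 0 /\ h = T_ R N L \o R_ R N s \o M_ R N al] &
      (forall (L1 L2 : {set 'I_N}) (s1 s2 : 'S_N) (a1 a2 : Cx R),
          a1 != 0 -> a2 != 0 ->
          (T_ R N L1 \o R_ R N s1 \o M_ R N a1) \o (T_ R N L2 \o R_ R N s2 \o M_ R N a2)
          = T_ R N (symdiff N L1 (s1 @: L2)) \o R_ R N (permcomp N s1 s2) \o M_ R N (a1 * a2))]
  /\
  (* G_N is a subgroup of frak G_N, isomorphic to ({+-1}^N x|_phi S_N) x C^* *)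
  [/\ subgroup R N (GN R N), GN R N `<=` frakG R N &
      exists F : SP R N -> (set_type (Dset R N) -> set_type (Dset R N)),
        [/\ (forall x y, SPcarrier R N x -> SPcarrier R N y ->
               F (SPmul R N x y) = F x \o F y),
            (forall x y, SPcarrier R N x -> SPcarrier R N y -> F x = F y -> x = y)
          & F @` SPcarrier R N = GN R N]].
Proof.
have frakG1 := @frakG_TRM R N _ _ _ (oner_neq0 _).
split; split.
- by move=> L; have := frakG1 L 1%g; rewrite R_1 M_1.
- by move=> s; have := frakG1 finset.set0 s; rewrite T_0 M_1.
- by move=> a a0; have := @frakG_TRM R N finset.set0 1%g a a0; rewrite T_0 R_1.
- exact: GNE.
- exact: TRM_comp.
- exact: GN_subgroup.
- exact: GN_sub_frakG.
- exists (@trm_of R N); split; first exact: trm_of_morph.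
  + exact: (@trm_of_inj R N hN).
  + exact: trm_of_image.
Qed.
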